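(* Let $A$ be a partially ordered set, $G$ a passable composite game over $A$, and $a\in A$. If every left option $G^L$ of $G$ satisfies $G^L\le [a]$, then $G\le [a]$.
   Context: Games over a poset $A$ are defined inductively: for each $a\in A$ there is an atomic game $[a]$, which has no options; and if $L$ and $R$ are non-empty sets of games, then $\{L\mid R\}$ is a composite game with left options $L$ and right options $R$. The relations $\le$ and $\lhd$ are defined by simultaneous recursion: $G\le H$ iff (1) every left option $G^L$ of $G$ satisfies $G^L\lhd H$, (2) every right option $H^R$ of $H$ satisfies $G\lhd H^R$, and (3) if $G$ or $H$ is atomic then $G\lhd H$; and $G\lhd H$ iff (1) some right option $G^R$ of $G$ satisfies $G^R\le H$, or (2) some left option $H^L$ of $H$ satisfies $G\le H^L$, or (3) $G=[a]$, $H=[b]$ are atomic and $a\le b$. A game $G$ is passable if $G\lhd G$ and recursively all its options are passable. *)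

From mathcomp Require Import all_boot all_order.
Set Implicit Arguments. Unset Strict Implicit. Unset Printing Implicit Defensive.
Import Order.TTheory.

(* Games over a poset A.  A composite game {L | R} has its (non-empty) sets of
   left and right options given as families indexed by (inhabited) types. *)
Inductive game (d : Order.disp_t) (A : porderType d) : Type :=
| Atom : A -> game A
| Comp : forall (IL : Type) (L : IL -> game A) (IR : Type) (R : IR -> game A),
    inhabited IL -> inhabited IR -> game A.

Arguments Atom {d A} a.
Arguments Comp {d A IL} L {IR} R _ _.

Section Games.
Context {d : Order.disp_t} {A : porderType d}.

Definition is_atom (G : game A) : Prop :=
  match G with Atom _ => True | Comp _ _ _ _ _ _ => False end.

Definition is_composite (G : game A) : Prop :=
  match G with Atom _ => False | Comp _ _ _ _ _ _ => True end.

Definition left_option (GL G : game A) : Prop :=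
  match G with
  | Atom _ => False
  | Comp _ L _ _ _ _ => exists i, L i = GL
  end.

(* Simultaneous recursion: rel G H = (G <= H, G <| H). *)
Fixpoint rel (G : game A) : game A -> Prop * Prop :=
  fix relH (H : game A) : Prop * Prop :=
    let lfGH :=
      (match G with
       | Comp _ _ _ R _ _ => exists i, fst (rel (R i) H)
       | Atom _ => False end)
      \/ (match H with
          | Comp _ L' _ _ _ _ => exists j, fst (relH (L' j))
          | Atom _ => False end)
      \/ (match G, H with
          | Atom a, Atom b => (a <= b)%O
          | _, _ => False end) in
    let leGH :=
      [/\ (match G with
           | Comp _ L _ _ _ _ => forall i, snd (rel (L i) H)
           | Atom _ => True end),
          (match H with
           | Comp _ _ _ R' _ _ => forall j, snd (relH (R' j))
           | Atom _ => True end)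
        & (is_atom G \/ is_atom H -> lfGH)] in
    (leGH, lfGH).

Definition game_le (G H : game A) : Prop := fst (rel G H).
Definition game_lf (G H : game A) : Prop := snd (rel G H).

Fixpoint passable (G : game A) : Prop :=
  game_lf G G /\
  match G with
  | Atom _ => True
  | Comp _ L _ R _ _ => (forall i, passable (L i)) /\ (forall j, passable (R j))
  end.

End Games.

From mathcomp Require Import all_boot all_order.
Import Order.TTheory.

(* Then, for a composite G whose left options all lie below [a], induction on a
   passable X shows that X <| G implies X <| [a] and X <= G implies X <= [a];
   taking X = G and using G <= G gives the result.  Passability is needed
   because X <= [a] also demands X <| [a]: when X is composite, X <| X supplies
   either some X^R <= X <= G or some X^L with X <= X^L and X^L <| G. *)

Set Implicit Arguments.
Unset Strict Implicit.

Section Games.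
Context {d : Order.disp_t} {A : porderType d}.
Implicit Types (G H X Y Z : game A) (x y : A).

Definition right_option (GR G : game A) : Prop :=
  match G with
  | Atom _ => False
  | Comp _ _ _ R _ _ => exists j, R j = GR
  end.

Definition game_option (H G : game A) : Prop := left_option H G \/ right_option H G.

Lemma game_option_ind (P : game A -> Prop) :
  (forall G, (forall H, game_option H G -> P H) -> P G) -> forall G, P G.
Proof.
move=> IH; elim=> [x|IL L IHL IR R IHR hL hR]; apply: IH => H [] //=.
- by case=> i <-.
- by case=> j <-.
Qed.

Lemma game_le_def G H :
  game_le G H <->
  [/\ forall GL, left_option GL G -> game_lf GL H,
      forall HR, right_option HR H -> game_lf G HR
    & is_atom G \/ is_atom H -> game_lf G H].
Proof.
apply: (@iff_trans _
  [/\ (match G with Comp _ L _ _ _ _ => forall i, game_lf (L i) H | Atom _ => True end),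
      (match H with Comp _ _ _ R _ _ => forall j, game_lf G (R j) | Atom _ => True end)
    & (is_atom G \/ is_atom H -> game_lf G H)]); first by case: G; case: H.
split=> -[hL hR hA]; split=> //.
- by case: G hL {hR hA} => //= IL L IR R ? ? hL _ [i <-].
- by case: H hR {hL hA} => //= IL L IR R ? ? hR _ [j <-].
- by case: G hL {hR hA} => //= IL L IR R ? ? hL i; apply: hL; exists i.
- by case: H hR {hL hA} => //= IL L IR R ? ? hR j; apply: hR; exists j.
Qed.

Lemma game_lf_def G H :
  game_lf G H <->
  [\/ exists2 GR, right_option GR G & game_le GR H,
      exists2 HL, left_option HL H & game_le G HL
    | exists x y, [/\ G = Atom x, H = Atom y & (x <= y)%O]].
Proof.
apply: (@iff_trans _
  ((match G with Comp _ _ _ R _ _ => exists i, game_le (R i) H | Atom _ => False end) \/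
  (match H with Comp _ L _ _ _ _ => exists j, game_le G (L j) | Atom _ => False end) \/
  (match G, H with Atom x, Atom y => (x <= y)%O | _, _ => False end)));
  first by case: G; case: H.
split.
- case=> [|[|]].
  + by case: G => //= IL L IR R ? ? [i hi]; apply: Or31; exists (R i) => //; exists i.
  + by case: H => //= IL L IR R ? ? [j hj]; apply: Or32; exists (L j) => //; exists j.
  + by case: G; case: H => // y x xy; apply: Or33; exists x, y.
- case=> [[GR]|[HL]|[x [y [-> -> xy]]]]; last by right; right.
  + by case: G => //= IL L IR R ? ? [i <-] hi; left; exists i.
  + by case: H => //= IL L IR R ? ? [j <-] hj; right; left; exists j.
Qed.

Lemma game_le_atom x y : (x <= y)%O -> game_le (Atom x) (Atom y).
Proof.
by move=> xy; apply/game_le_def; split=> // _; apply/game_lf_def; apply: Or33; exists x, y.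
Qed.

Lemma game_lf_of_le_atom G H : is_atom G \/ is_atom H -> game_le G H -> game_lf G H.
Proof. by move=> atomGH /game_le_def [_ _]; apply. Qed.

Lemma game_le_refl G : game_le G G.
Proof.
elim/game_option_ind: G => G IH; apply/game_le_def; split.
- by move=> GL GL_opt; apply/game_lf_def; apply: Or32; exists GL => //; apply: IH; left.
- by move=> GR GR_opt; apply/game_lf_def; apply: Or31; exists GR => //; apply: IH; right.
- case: G {IH} => [x _|? ? ? ? ? ? [] //]; apply/game_lf_def; apply: Or33; by exists x, x.
Qed.

Definition game_trans_at X Y Z : Prop :=
  [/\ game_le X Y -> game_lf Y Z -> game_lf X Z,
      game_lf X Y -> game_le Y Z -> game_lf X Z
    & game_le X Y -> game_le Y Z -> game_le X Z].

Section TransitivityStep.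
Variables X Y Z : game A.
Hypothesis IHX_lf_le :
  forall X', game_option X' X -> game_lf X' Y -> game_le Y Z -> game_lf X' Z.
Hypothesis IHX_le :
  forall X', game_option X' X -> game_le X' Y -> game_le Y Z -> game_le X' Z.
Hypothesis IHY_le_lf :
  forall Y', game_option Y' Y -> game_le X Y' -> game_lf Y' Z -> game_lf X Z.
Hypothesis IHY_lf_le :
  forall Y', game_option Y' Y -> game_lf X Y' -> game_le Y' Z -> game_lf X Z.
Hypothesis IHZ_le_lf :
  forall Z', game_option Z' Z -> game_le X Y -> game_lf Y Z' -> game_lf X Z'.
Hypothesis IHZ_le :
  forall Z', game_option Z' Z -> game_le X Y -> game_le Y Z' -> game_le X Z'.

Lemma game_le_lf_trans_step : game_le X Y -> game_lf Y Z -> game_lf X Z.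
Proof.
move=> XY /game_lf_def [[YR YR_opt YRZ] | [ZL ZL_opt YZL] | [y [z [eY eZ yz]]]].
- case/game_le_def: XY => _ XYR _.
  exact: IHY_lf_le (or_intror YR_opt) (XYR _ YR_opt) YRZ.
- by apply/game_lf_def; apply: Or32; exists ZL => //; apply: IHZ_le XY YZL; left.
- have YZ : game_le Y Z by rewrite eY eZ; apply: game_le_atom.
  have /game_lf_def : game_lf X Y by apply: game_lf_of_le_atom XY; rewrite eY; right.
  case=> [[XR XR_opt XRY] | [YL] | [x [y' [eX eY' xy]]]].
  + by apply/game_lf_def; apply: Or31; exists XR => //; apply: IHX_le XRY YZ; right.
  + by rewrite eY.
  + apply/game_lf_def; apply: Or33; exists x, z; split=> //.
    have ey' : y' = y by move: eY'; rewrite eY => -[].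
    by rewrite ey' in xy; apply: le_trans xy yz.
Qed.

Lemma game_lf_le_trans_step : game_lf X Y -> game_le Y Z -> game_lf X Z.
Proof.
move=> /game_lf_def [[XR XR_opt XRY] | [YL YL_opt XYL] | [x [y [eX eY xy]]]] YZ.
- by apply/game_lf_def; apply: Or31; exists XR => //; apply: IHX_le XRY YZ; right.
- case/game_le_def: YZ => YLZ _ _.
  exact: IHY_le_lf (or_introl YL_opt) XYL (YLZ _ YL_opt).
- apply: game_le_lf_trans_step; first by rewrite eX eY; apply: game_le_atom.
  by apply: game_lf_of_le_atom YZ; rewrite eY; left.
Qed.

Lemma game_le_trans_step : game_le X Y -> game_le Y Z -> game_le X Z.
Proof.
move=> XY YZ; apply/game_le_def; split.
- case/game_le_def: XY => XLY _ _ XL XL_opt.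
  exact: IHX_lf_le (or_introl XL_opt) (XLY _ XL_opt) YZ.
- case/game_le_def: YZ => _ YZR _ ZR ZR_opt.
  exact: IHZ_le_lf (or_intror ZR_opt) XY (YZR _ ZR_opt).
- case=> atomXZ.
  + by apply: game_lf_le_trans_step YZ; apply: game_lf_of_le_atom XY; left.
  + by apply: game_le_lf_trans_step XY _; apply: game_lf_of_le_atom YZ; right.
Qed.

End TransitivityStep.

Lemma game_trans_at_all X Y Z : game_trans_at X Y Z.
Proof.
elim/game_option_ind: X Y Z => X IHX Y.
elim/game_option_ind: Y => Y IHY Z.
elim/game_option_ind: Z => Z IHZ.
have {}IHX X' : game_option X' X -> game_trans_at X' Y Z by move/IHX.
have {}IHY Y' : game_option Y' Y -> game_trans_at X Y' Z by move/IHY.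
split; [apply: game_le_lf_trans_step | apply: game_lf_le_trans_step
       | apply: game_le_trans_step].
all: by move=> ? /IHX [] || move=> ? /IHY [] || move=> ? /IHZ [].
Qed.

Lemma game_le_trans X Y Z : game_le X Y -> game_le Y Z -> game_le X Z.
Proof. by case: (game_trans_at_all X Y Z). Qed.

Lemma game_le_lf_trans X Y Z : game_le X Y -> game_lf Y Z -> game_lf X Z.
Proof. by case: (game_trans_at_all X Y Z). Qed.

Section LeftOptionsBelowAtom.
Variables (G : game A) (a : A).
Hypothesis G_composite : is_composite G.
Hypothesis left_options_le_a : forall GL, left_option GL G -> game_le GL (Atom a).

Lemma lf_atom_of_lf X :
  (forall XR, right_option XR X -> game_le XR G -> game_le XR (Atom a)) ->
  game_lf X G -> game_lf X (Atom a).
Proof.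
move=> IHR /game_lf_def [[XR XR_opt XRG] | [GL GL_opt XGL] | [x [y [_ eG _]]]].
- by apply/game_lf_def; apply: Or31; exists XR => //; apply: IHR.
- apply: game_lf_of_le_atom; first by right.
  exact: game_le_trans XGL (left_options_le_a GL_opt).
- by move: G_composite; rewrite eG.
Qed.

Lemma le_atom_of_le X :
  game_lf X X ->
  (forall XL, left_option XL X -> game_lf XL G -> game_lf XL (Atom a)) ->
  (forall XR, right_option XR X -> game_le XR G -> game_le XR (Atom a)) ->
  game_le X G -> game_le X (Atom a).
Proof.
move=> XX IHL IHR XG; case/game_le_def: (XG) => XLG _ XG_atom.
apply/game_le_def; split=> [XL XL_opt | // | _]; first exact: IHL XL_opt (XLG _ XL_opt).
case/game_lf_def: XX => [[XR XR_opt XRX] | [XL XL_opt XXL] | [x [_ [eX _ _]]]].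
- apply/game_lf_def; apply: Or31; exists XR => //.
  exact: IHR (game_le_trans XRX XG).
- exact: game_le_lf_trans XXL (IHL _ XL_opt (XLG _ XL_opt)).
- by apply: lf_atom_of_lf => //; apply: XG_atom; rewrite eX; left.
Qed.

Lemma passable_le_atom_of_le X :
  passable X ->
  (game_lf X G -> game_lf X (Atom a)) /\ (game_le X G -> game_le X (Atom a)).
Proof.
elim: X => [x _ | IL L IHL IR R IHR hL hR [XX [passL passR]]].
  have lf_x : game_lf (Atom x) G -> game_lf (Atom x) (Atom a) by apply: lf_atom_of_lf.
  split=> //; apply: le_atom_of_le => //; apply/game_lf_def; apply: Or33; by exists x, x.
have IHR' XR : right_option XR (Comp L R hL hR) -> game_le XR G -> game_le XR (Atom a).
  by case=> j <-; case: (IHR j (passR j)).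
have lf_X := lf_atom_of_lf IHR'.
split=> //; apply: le_atom_of_le => // XL [i <-].
by case: (IHL i (passL i)).
Qed.

End LeftOptionsBelowAtom.

End Games.

Theorem proposition6p13 (d : Order.disp_t) (A : porderType d) (G : game A) (a : A) :
  is_composite G -> passable G ->
  (forall GL, left_option GL G -> game_le GL (Atom a)) ->
  game_le G (Atom a).
Proof.
move=> G_composite G_passable left_options_le_a.
exact: (passable_le_atom_of_le G_composite left_options_le_a G_passable).2 (game_le_refl G).
Qed.
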